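(* Let $k\in I$ with $a_{kk}=0$ and $p(k)=1$. Define $r_k(\alpha_k)=-\alpha_k$; for $i\ne k$, $r_k(\alpha_i)=\alpha_i$ if $a_{ik}=a_{ki}=0$ and $r_k(\alpha_i)=\alpha_i+\alpha_k$ otherwise. Define $X'_k=Y_k$, $Y'_k=X_k$; for $i\neq k$ with $a_{ik}=a_{ki}=0$ put $X'_i=X_i$, $Y'_i=Y_i$; for $i\neq k$ with $a_{ik}\ne0$ or $a_{ki}\neq0$ put $X'_i=[X_i,X_k]$, $Y'_i=[Y_i,Y_k]$; and $h'_i=[X'_i,Y'_i]$. Then $r_k(\alpha_1),\dots,r_k(\alpha_n)$ are linearly independent, and for all $h\in\mathfrak h$ and $i,j\in I$: $[h,X'_i]=r_k(\alpha_i)(h)X'_i$, $[h,Y'_i]=-r_k(\alpha_i)(h)Y'_i$, $[X'_i,Y'_j]=\delta_{ij}h'_i$. Moreover, if $\alpha_k$ is regular (i.e. for every $j\neq k$, $a_{kj}=0$ implies $a_{jk}=0$), then $\mathfrak h$ together with $X'_1,\dots,X'_n,Y'_1,\dots,Y'_n$ generate $\mathfrak g(A)$.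
   Context: Let $I=\{1,\dots,n\}$, let $A=(a_{ij})_{i,j\in I}$ be a complex $n\times n$ matrix and $p:I\to\mathbb Z_2$ a parity function. Fix a complex vector space $\mathfrak h$ of dimension $n+\operatorname{corank}(A)$, linearly independent $\alpha_1,\dots,\alpha_n\in\mathfrak h^*$ and $h_1,\dots,h_n\in\mathfrak h$ with $\alpha_j(h_i)=a_{ij}$. Let $\bar{\mathfrak g}(A)$ be the Lie superalgebra generated by $\mathfrak h$ (even, abelian) and elements $X_i,Y_i$ ($i\in I$) of parity $p(i)$ subject to $[h,X_i]=\alpha_i(h)X_i$, $[h,Y_i]=-\alpha_i(h)Y_i$, $[X_i,Y_j]=\delta_{ij}h_i$. The contragredient Lie superalgebra $\mathfrak g(A)$ is the quotient of $\bar{\mathfrak g}(A)$ by the unique maximal ideal meeting $\mathfrak h$ trivially; we keep writing $X_i,Y_i,h_i$ for the images. *)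

From HB Require Import structures.
From mathcomp Require Import all_boot all_order all_algebra.
Set Implicit Arguments. Unset Strict Implicit. Unset Printing Implicit Defensive.
Import GRing.Theory.
Local Open Scope ring_scope.

Definition lin_subspace (F : fieldType) (V : lmodType F) (W : V -> Prop) : Prop :=
  W 0 /\ (forall (a : F) x y, W x -> W y -> W (a *: x + y)).

(* Lie superalgebra structure on V: bracket [br] and parity predicate
   [par b] (par false = even part V_0, par true = odd part V_1). *)
Definition is_lie_superalgebra (F : fieldType) (V : lmodType F)
    (br : V -> V -> V) (par : bool -> V -> Prop) : Prop :=
  (forall (a : F) x y z, br (a *: x + y) z = a *: br x z + br y z) /\
  (forall (a : F) x y z, br z (a *: x + y) = a *: br z x + br z y) /\
  (forall b, lin_subspace (par b)) /\
  (forall v, exists v0 v1, par false v0 /\ par true v1 /\ v = v0 + v1) /\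
  (forall v, par false v -> par true v -> v = 0) /\
  (forall a b x y, par a x -> par b y -> par (addb a b) (br x y)) /\
  (forall a b x y, par a x -> par b y ->
     br x y = - (((-1 : F) ^+ (a && b)) *: br y x)) /\
  (forall a b x y z, par a x -> par b y ->
     br x (br y z) = br (br x y) z + ((-1 : F) ^+ (a && b)) *: br y (br x z)).

(* An ideal of the Lie superalgebra (bracket on either side, by super
   antisymmetry it suffices to close under left brackets). *)
Definition is_ideal (F : fieldType) (V : lmodType F) (br : V -> V -> V)
    (I : V -> Prop) : Prop :=
  lin_subspace I /\ (forall x v, I v -> I (br x v)).

Definition generated_by (F : fieldType) (V : lmodType F) (br : V -> V -> V)
    (S : V -> Prop) (v : V) : Prop :=
  forall W : V -> Prop, lin_subspace W ->
    (forall x y, W x -> W y -> W (br x y)) ->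
    (forall s, S s -> W s) -> W v.

(* Pairing of h = 'rV_m with h^* = 'cV_m. *)
Definition ev (F : fieldType) (m : nat) (u : 'rV[F]_m) (f : 'cV[F]_m) : F :=
  (u *m f) 0 0.

(* (V, br, par, hmap, X, Y) is the contragredient Lie superalgebra g(A)
   for the realization (h = 'rV_m, alpha, hh) and parity p:
   h embeds (even, abelian), X_i, Y_i of parity p i satisfy the defining
   relations, g is generated by h, X_i, Y_i, and g has no nonzero ideal
   meeting h trivially (so g is the quotient of \bar g(A) by the maximal
   such ideal). *)
Definition is_contragredient (F : fieldType) (n : nat) (A : 'M[F]_n)
    (p : 'I_n -> bool) (m : nat) (alpha : 'I_n -> 'cV[F]_m)
    (hh : 'I_n -> 'rV[F]_m) (V : lmodType F) (br : V -> V -> V)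
    (par : bool -> V -> Prop) (hmap : 'rV[F]_m -> V) (X Y : 'I_n -> V) : Prop :=
  m = (n + (n - \rank A))%N /\
  free [seq alpha i | i <- enum 'I_n] /\
  (forall i j, ev (hh i) (alpha j) = A i j) /\
  is_lie_superalgebra br par /\
  (forall (a : F) u w, hmap (a *: u + w) = a *: hmap u + hmap w) /\
  injective hmap /\
  (forall u, par false (hmap u)) /\
  (forall u w, br (hmap u) (hmap w) = 0) /\
  (forall i, par (p i) (X i) /\ par (p i) (Y i)) /\
  (forall u i, br (hmap u) (X i) = ev u (alpha i) *: X i) /\
  (forall u i, br (hmap u) (Y i) = - (ev u (alpha i) *: Y i)) /\
  (forall i j, br (X i) (Y j) = if i == j then hmap (hh i) else 0) /\
  (forall v, generated_by br
     (fun w => (exists u, w = hmap u) \/ (exists i, w = X i) \/ (exists i, w = Y i)) v) /\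
  (forall I, is_ideal br I -> (forall u, I (hmap u) -> hmap u = 0) ->
     forall v, I v -> v = 0).

Definition rk (F : fieldType) (n m : nat) (A : 'M[F]_n)
    (alpha : 'I_n -> 'cV[F]_m) (k i : 'I_n) : 'cV[F]_m :=
  if i == k then - alpha k
  else if (A i k == 0) && (A k i == 0) then alpha i else alpha i + alpha k.

(* New generators X'_i (resp. Y'_i with X := Y). *)
Definition Xp (F : fieldType) (n : nat) (A : 'M[F]_n) (V : lmodType F)
    (br : V -> V -> V) (X Y : 'I_n -> V) (k i : 'I_n) : V :=
  if i == k then Y k
  else if (A i k == 0) && (A k i == 0) then X i else br (X i) (X k).

Definition hp (F : fieldType) (n : nat) (A : 'M[F]_n) (V : lmodType F)
    (br : V -> V -> V) (X Y : 'I_n -> V) (k i : 'I_n) : V :=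
  br (Xp A br X Y k i) (Xp A br Y X k i).

(* Fix an odd index k with a_kk = 0.  The proof combines three ingredients.
   1. Linear algebra: each r_k(alpha_i) differs from alpha_i by a multiple of
      alpha_k (and r_k(alpha_k) = -alpha_k), so the family r_k(alpha) is again
      free (rk_free).
   2. A vanishing principle (lowest_weight_vanishing): choose h0 in h with
      alpha_i(h0) = 1 for all i.  A weight vector v killed by every X_i whose
      weight takes the value -2 at h0 is zero, because the subspace obtained from
      v by repeated brackets with the Y_j is an ideal of g on which ad h0 is
      annihilated by a product of factors (ad h0 + a), a >= 1; hence it meets h
      trivially.  The same holds with X and Y exchanged.  Consequently
      [Y_j, Y_k] = [X_j, X_k] = 0 whenever a_jk = a_kj = 0 (Y_comm, X_comm).
   3. Computations with the super Jacobi identity then give the weights of the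
      new generators, the relations [X'_i, Y'_j] = delta_ij h'_i and, when
      alpha_k is regular, formulas recovering X_i and Y_i from the new
      generators. *)

From HB Require Import structures.
From mathcomp Require Import all_boot all_order all_algebra.
Import GRing.Theory Num.Theory.
Local Open Scope ring_scope.
Set Implicit Arguments. Unset Strict Implicit. Unset Printing Implicit Defensive.

Section Realization.
Variables (F : fieldType) (n m : nat).

Lemma evDr (u : 'rV[F]_m) (c d : 'cV[F]_m) : ev u (c + d) = ev u c + ev u d.
Proof. by rewrite /ev mulmxDr mxE. Qed.

Lemma evNr (u : 'rV[F]_m) (c : 'cV[F]_m) : ev u (- c) = - ev u c.
Proof. by rewrite /ev mulmxN mxE. Qed.

Lemma free_ordP (f : 'I_n -> 'cV[F]_m) :
  free [seq f i | i <- enum 'I_n] <->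
  (forall c : 'I_n -> F, \sum_i c i *: f i = 0 -> forall i, c i = 0).
Proof.
have -> : [seq f i | i <- enum 'I_n] = [tuple f i | i < n] :> seq _ by [].
split=> [/freeP hf c hc | hf]; last apply/freeP => c hc.
  by apply: hf; apply: etrans hc; apply: eq_bigr => i _; rewrite nth_mktuple.
by apply: hf; apply: etrans hc; apply: eq_bigr => i _; rewrite nth_mktuple.
Qed.

Lemma exists_unit_coweight (alpha : 'I_n -> 'cV[F]_m) :
  free [seq alpha i | i <- enum 'I_n] -> exists h0, forall i, ev h0 (alpha i) = 1.
Proof.
move=> freeA.
case: (linear_of_free [seq alpha i | i <- enum 'I_n] [seq (1 : F^o) | i <- enum 'I_n])
  => f hf.
have {hf} := hf freeA; rewrite !size_map -map_comp => /(_ erefl) hf.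
have f1 i : f (alpha i) = 1.
  by move/eq_in_map: hf => /(_ i); rewrite mem_enum; apply.
exists (\row_r f (delta_mx r 0)) => i; rewrite -(f1 i) /ev.
rewrite [in RHS](matrix_sum_delta (alpha i)) linear_sum mxE.
by apply: eq_bigr => r _; rewrite big_ord1 linearZ /= mxE ord1 mulrC.
Qed.

Lemma rk_free (A : 'M[F]_n) (alpha : 'I_n -> 'cV[F]_m) (k : 'I_n) :
  free [seq alpha i | i <- enum 'I_n] -> free [seq rk A alpha k i | i <- enum 'I_n].
Proof.
move=> /free_ordP freeA; apply/free_ordP => c hc.
pose linked i := ~~ ((A i k == 0) && (A k i == 0)).
pose d i := if i == k then - c k + \sum_(l < n | (l != k) && linked l) c l else c i.
have d0 : forall i, d i = 0.
  apply: freeA; apply: etrans hc.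
  rewrite (bigD1 k) //= [in RHS](bigD1 k) //= /d eqxx /rk eqxx scalerDl scalerN -scaleNr.
  rewrite scaler_suml big_mkcondr /= -addrA -big_split /=; congr (_ + _).
  apply: eq_bigr => i nik; rewrite (negbTE nik) /linked.
  by case: (_ && _); rewrite /= ?scale0r ?add0r // scalerDr addrC.
have ck i : i != k -> c i = 0 by move=> nik; have := d0 i; rewrite /d (negbTE nik).
move=> i; case: (eqVneq i k) => [->|]; last exact: ck.
have := d0 k; rewrite /d eqxx big1 ?addr0 => [/eqP|l /andP [lk _]]; last exact: ck.
by rewrite oppr_eq0 => /eqP.
Qed.

End Realization.

Section Subspace.
Variables (F : fieldType) (V : lmodType F) (W : V -> Prop).
Hypothesis linW : lin_subspace W.

Lemma lin0 : W 0.
Proof. by case: linW. Qed.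
Lemma linD x y : W x -> W y -> W (x + y).
Proof. by case: linW => _ h wx wy; rewrite -[x]scale1r; apply: h. Qed.
Lemma linZ a x : W x -> W (a *: x).
Proof. by case: linW => h0 h wx; rewrite -[a *: x]addr0; apply: h. Qed.
End Subspace.

Section SuperLie.
Variables (F : fieldType) (V : lmodType F) (br : V -> V -> V) (par : bool -> V -> Prop).
Hypothesis HL : is_lie_superalgebra br par.

Lemma brDl a x y z : br (a *: x + y) z = a *: br x z + br y z.
Proof. by case: HL. Qed.
Lemma brDr a x y z : br z (a *: x + y) = a *: br z x + br z y.
Proof. by case: HL => _ []. Qed.
Lemma br0l z : br 0 z = 0.
Proof.
have := brDl 1 0 0 z; rewrite !scale1r addr0 => /(congr1 (fun t => t - br 0 z)).
by rewrite subrr addrK => <-.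
Qed.
Lemma br0r z : br z 0 = 0.
Proof.
have := brDr 1 0 0 z; rewrite !scale1r addr0 => /(congr1 (fun t => t - br z 0)).
by rewrite subrr addrK => <-.
Qed.
Lemma brZl a x z : br (a *: x) z = a *: br x z.
Proof. by rewrite -[a *: x]addr0 brDl br0l addr0. Qed.
Lemma brZr a x z : br z (a *: x) = a *: br z x.
Proof. by rewrite -[a *: x]addr0 brDr br0r addr0. Qed.
Lemma brAl x y z : br (x + y) z = br x z + br y z.
Proof. by rewrite -{1}[x]scale1r brDl scale1r. Qed.
Lemma brAr x y z : br z (x + y) = br z x + br z y.
Proof. by rewrite -{1}[x]scale1r brDr scale1r. Qed.
Lemma brNl x z : br (- x) z = - br x z.
Proof. by rewrite -scaleN1r brZl scaleN1r. Qed.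
Lemma brNr x z : br z (- x) = - br z x.
Proof. by rewrite -scaleN1r brZr scaleN1r. Qed.
Lemma brBr x y z : br z (x - y) = br z x - br z y.
Proof. by rewrite brAr brNr. Qed.

Lemma par_lin b : lin_subspace (par b).
Proof. by case: HL => _ [_ []]. Qed.
Lemma par_br a b x y : par a x -> par b y -> par (addb a b) (br x y).
Proof. by case: HL => _ [_ [_ [_ [_ [h _]]]]]; apply: h. Qed.
Lemma antisym a b x y : par a x -> par b y ->
  br x y = - (((-1 : F) ^+ (a && b)) *: br y x).
Proof. by case: HL => _ [_ [_ [_ [_ [_ [h _]]]]]]; apply: h. Qed.
Lemma jacobi a b x y z : par a x -> par b y ->
  br x (br y z) = br (br x y) z + ((-1 : F) ^+ (a && b)) *: br y (br x z).
Proof. by case: HL => _ [_ [_ [_ [_ [_ [_ h]]]]]]; apply: h. Qed.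

Lemma jacobi_even a x y z : par false x -> par a y ->
  br x (br y z) = br (br x y) z + br y (br x z).
Proof. by move=> px py; rewrite (jacobi _ px py) expr0 scale1r. Qed.

Lemma antisym_even b x y : par b x -> par false y -> br x y = - br y x.
Proof. by move=> px py; rewrite (antisym px py) andbF expr0 scale1r. Qed.

Section Contragredient.
Variables (n m : nat) (A : 'M[F]_n) (p : 'I_n -> bool)
  (alpha : 'I_n -> 'cV[F]_m) (hh : 'I_n -> 'rV[F]_m) (hmap : 'rV[F]_m -> V)
  (X Y : 'I_n -> V).
Hypothesis charF0 : [pchar F] =i pred0.
Hypothesis freeA : free [seq alpha i | i <- enum 'I_n].
Hypothesis evhh : forall i j, ev (hh i) (alpha j) = A i j.
Hypothesis hmapD : forall (a : F) u w, hmap (a *: u + w) = a *: hmap u + hmap w.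
Hypothesis par_h : forall u, par false (hmap u).
Hypothesis br_hh : forall u w, br (hmap u) (hmap w) = 0.
Hypothesis parXY : forall i, par (p i) (X i) /\ par (p i) (Y i).
Hypothesis hX : forall u i, br (hmap u) (X i) = ev u (alpha i) *: X i.
Hypothesis hY : forall u i, br (hmap u) (Y i) = - (ev u (alpha i) *: Y i).
Hypothesis hXY : forall i j, br (X i) (Y j) = if i == j then hmap (hh i) else 0.
Hypothesis gen : forall v, generated_by br
  (fun w => (exists u, w = hmap u) \/ (exists i, w = X i) \/ (exists i, w = Y i)) v.
Hypothesis h_faithful : forall I, is_ideal br I ->
  (forall u, I (hmap u) -> hmap u = 0) -> forall v, I v -> v = 0.

Lemma hmap0 : hmap 0 = 0.
Proof.
have := hmapD 1 0 0; rewrite !scale1r addr0 => /(congr1 (fun t => t - hmap 0)).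
by rewrite subrr addrK => <-.
Qed.
Lemma hmapZ a u : hmap (a *: u) = a *: hmap u.
Proof. by rewrite -[a *: u]addr0 hmapD hmap0 addr0. Qed.
Lemma parX i : par (p i) (X i). Proof. by case: (parXY i). Qed.
Lemma parY i : par (p i) (Y i). Proof. by case: (parXY i). Qed.

Lemma eq_opp0 (z : V) : z = - z -> z = 0.
Proof.
move=> h; have : z *+ 2 = 0 by rewrite mulr2n {1}h addNr.
by rewrite -scaler_nat => /eqP; rewrite scaler_eq0 (pcharf0P _).1 // => /eqP.
Qed.

(* Abstract setting shared by the two halves (E, Fo) = (X, Y) and (Y, X):
   h, E, Fo generate, Fo j has weight mu j, [E_i, Fo_j] lies in h and
   vanishes for i != j, and h0 takes the same nonzero value c0 on every mu j. *)
Section LowestWeightVanishing.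
Variables (E Fo : 'I_n -> V) (mu : 'I_n -> 'cV[F]_m) (g : 'I_n -> 'rV[F]_m)
  (h0 : 'rV[F]_m) (c0 : F).
Hypothesis genEF : forall v, generated_by br
  (fun w => (exists u, w = hmap u) \/ (exists i, w = E i) \/ (exists i, w = Fo i)) v.
Hypothesis parE : forall i, par (p i) (E i).
Hypothesis parF : forall i, par (p i) (Fo i).
Hypothesis hF : forall u j, br (hmap u) (Fo j) = ev u (mu j) *: Fo j.
Hypothesis hEF : forall i j, br (E i) (Fo j) = if i == j then hmap (g i) else 0.
Hypothesis h0mu : forall j, ev h0 (mu j) = c0.
Hypothesis c0_neq0 : c0 != 0.

Definition T w := br (hmap h0) w.

Fixpoint Tprod (a N : nat) (w : V) : V :=
  if N is N'.+1 then T (Tprod a N' w) - ((a + N)%:R * c0) *: Tprod a N' w else w.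

Lemma TprodD a N b x y : Tprod a N (b *: x + y) = b *: Tprod a N x + Tprod a N y.
Proof.
elim: N => [//|N IH] /=; rewrite IH /T brDr.
set c := (_ * c0).
by rewrite scalerDr scalerBr !scalerA [c * b]mulrC opprD addrACA.
Qed.

Lemma TprodT a N w : Tprod a N (T w) = T (Tprod a N w).
Proof. by elim: N => [//|N IH] /=; rewrite IH /T brBr brZr. Qed.

Lemma TprodS a N w : Tprod a N.+1 w = Tprod a.+1 N (T w - (a.+1%:R * c0) *: w).
Proof.
elim: N => [|N IH]; first by rewrite /= addn1.
transitivity (T (Tprod a N.+1 w) - ((a.+1 + N.+1)%:R * c0) *: Tprod a N.+1 w).
  by rewrite addSnnS.
by rewrite IH.
Qed.

(* ad Fo_j raises the T-eigenvalue by c0, hence shifts the factors by one. *)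
Lemma T_Fo j z : T (br (Fo j) z) = c0 *: br (Fo j) z + br (Fo j) (T z).
Proof. by rewrite /T (jacobi_even _ (par_h h0) (parF j)) hF h0mu brZl. Qed.

Lemma Tprod_Fo a N j w : Tprod a.+1 N (br (Fo j) w) = br (Fo j) (Tprod a N w).
Proof.
elim: N => [//|N IH] /=.
rewrite IH T_Fo brBr brZr addSn -natr1 mulrDl mul1r scalerDl opprD.
by rewrite [_ - c0 *: _]addrC addrACA subrr add0r.
Qed.

Lemma Tprod_mono a N d w : Tprod a N w = 0 -> Tprod a (N + d) w = 0.
Proof.
move=> h; elim: d => [|d IH]; first by rewrite addn0.
by rewrite addnS /= IH /T br0r scaler0 subrr.
Qed.

(* On h, where T vanishes, Tprod acts by a nonzero scalar (characteristic 0). *)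
Lemma Tprod_h a N u : exists2 c, c != 0 & Tprod a N (hmap u) = c *: hmap u.
Proof.
elim: N => [|N [c cnz IH]]; first by exists 1; rewrite ?oner_neq0 ?scale1r.
exists (- (((a + N.+1)%:R * c0) * c)); last first.
  by rewrite /= IH /T brZr br_hh scaler0 add0r scalerA scaleNr.
by rewrite oppr_eq0 !mulf_neq0 // (pcharf0P _).1 // addnS.
Qed.

(* Elements killed by some Tprod 0 N: on these, the eigenvalues of T lie in
   {c0, 2 c0, ...}. *)
Definition annihilated w := exists N, Tprod 0 N w = 0.

Lemma annihilated_lin : lin_subspace annihilated.
Proof.
split; first by exists 0%N.
move=> b x y [Nx hx] [Ny hy]; exists (Nx + Ny)%N.
by rewrite TprodD Tprod_mono // addnC Tprod_mono // scaler0 addr0.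
Qed.

Lemma annihilated_Fo j w : annihilated w -> annihilated (br (Fo j) w).
Proof.
case=> N hN; exists N.+1.
rewrite TprodS T_Fo mul1r [c0 *: _ + _]addrC addrK Tprod_Fo TprodT hN.
by rewrite /T !br0r.
Qed.

Section Vanishing.
Variables (v : V) (lam : 'cV[F]_m).
Hypothesis hv : forall u, br (hmap u) v = ev u lam *: v.
Hypothesis hlam : ev h0 lam = 2%:R * c0.
Hypothesis hEv : forall i, br (E i) v = 0.

Inductive Fclosure : V -> Prop :=
  | Fclosure_v : Fclosure v
  | Fclosure_0 : Fclosure 0
  | Fclosure_comb a x y : Fclosure x -> Fclosure y -> Fclosure (a *: x + y)
  | Fclosure_Fo j x : Fclosure x -> Fclosure (br (Fo j) x).

Lemma Fclosure_lin : lin_subspace Fclosure.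
Proof. by split; [exact: Fclosure_0 | exact: Fclosure_comb]. Qed.

(* Every element of the closure is killed by some Tprod 0 N: v is killed by
   (T - 2 c0)(T - c0), and ad Fo_j shifts the factors. *)
Lemma Fclosure_annihilated w : Fclosure w -> annihilated w.
Proof.
elim=> [||a x y _ hx _ hy|j x _ hx]; last exact: annihilated_Fo.
- have Tv : T v = (2%:R * c0) *: v by rewrite /T hv hlam.
  have T1v : Tprod 0 1 v = c0 *: v.
    by rewrite /= Tv add0n -scalerBl mulr_natl mulr2n mul1r addrK.
  exists 2%N; transitivity (T (Tprod 0 1 v) - (2%:R * c0) *: Tprod 0 1 v) => //.
  by rewrite T1v /T brZr -/(T v) Tv !scalerA mulrC subrr.
- exact: lin0 annihilated_lin.
- by case: annihilated_lin => _; apply.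
Qed.

Lemma Fclosure_stable y : Fclosure (br y v) ->
  (forall j x, Fclosure x -> Fclosure (br y x) -> Fclosure (br y (br (Fo j) x))) ->
  forall w, Fclosure w -> Fclosure (br y w).
Proof.
move=> yv ystep w; elim=> [||a x z _ hx _ hz|j x hx hyx] //; last exact: ystep.
- by rewrite br0r; exact: Fclosure_0.
- by rewrite brDr; exact: Fclosure_comb.
Qed.

(* The closure is stable under ad h, since v and the Fo_j are weight vectors. *)
Lemma Fclosure_h u w : Fclosure w -> Fclosure (br (hmap u) w).
Proof.
apply: Fclosure_stable.
  by rewrite hv -[_ *: v]addr0; exact: Fclosure_comb Fclosure_v Fclosure_0.
move=> j x hx hux; rewrite (jacobi_even _ (par_h u) (parF j)) hF brZl.
by apply: Fclosure_comb; apply: Fclosure_Fo.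
Qed.

(* The closure is stable under ad E_i, since [E_i, Fo_j] lies in h. *)
Lemma Fclosure_E i w : Fclosure w -> Fclosure (br (E i) w).
Proof.
apply: Fclosure_stable; first by rewrite hEv; exact: Fclosure_0.
move=> j x hx hEx; rewrite (jacobi _ (parE i) (parF j)) hEF addrC.
apply: Fclosure_comb; first exact: Fclosure_Fo.
by case: eqP => _; [exact: Fclosure_h | rewrite br0l; exact: Fclosure_0].
Qed.

Definition stabilizes x := forall w, Fclosure w -> Fclosure (br x w).

Lemma stabilizes0 : stabilizes 0.
Proof. by move=> w _; rewrite br0l; exact: Fclosure_0. Qed.

Lemma stabilizes_comb a x y : stabilizes x -> stabilizes y -> stabilizes (a *: x + y).
Proof.
move=> hx hy w hw.
by rewrite brDl; apply: Fclosure_comb; [exact: hx | exact: hy].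
Qed.

Lemma stabilizes_br a b x y : par a x -> par b y ->
  stabilizes x -> stabilizes y -> stabilizes (br x y).
Proof.
move=> pa pb hx hy w hw.
have -> : br (br x y) w = (- (-1) ^+ (a && b)) *: br y (br x w) + br x (br y w).
  by rewrite (jacobi _ pa pb) scaleNr addrCA addNr addr0.
by apply: Fclosure_comb; [apply: hy; apply: hx | apply: hx; apply: hy].
Qed.

(* Both homogeneous components stabilize the closure.  The Jacobi identity only
   applies to homogeneous elements, and this is the notion closed under brackets. *)
Definition homog_stabilizes x := exists x0 x1,
  [/\ par false x0, par true x1, x = x0 + x1, stabilizes x0 & stabilizes x1].

Lemma homog_stabilizes_lin : lin_subspace homog_stabilizes.
Proof.
split.
  by exists 0, 0; split; rewrite ?addr0 //; try exact: lin0 (par_lin _);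
    exact: stabilizes0.
move=> b x y [x0 [x1 [p0 p1 -> s0 s1]]] [y0 [y1 [q0 q1 -> t0 t1]]].
exists (b *: x0 + y0), (b *: x1 + y1); split; last 3 first.
- by rewrite scalerDr addrACA.
- exact: stabilizes_comb.
- exact: stabilizes_comb.
- by case: (par_lin false) => _; apply.
- by case: (par_lin true) => _; apply.
Qed.

Lemma homog_stabilizes_br x y :
  homog_stabilizes x -> homog_stabilizes y -> homog_stabilizes (br x y).
Proof.
move=> [x0 [x1 [p0 p1 -> s0 s1]]] [y0 [y1 [q0 q1 -> t0 t1]]].
exists (br x0 y0 + br x1 y1), (br x0 y1 + br x1 y0); split.
- exact: (linD (par_lin false) (par_br p0 q0) (par_br p1 q1)).
- exact: (linD (par_lin true) (par_br p0 q1) (par_br p1 q0)).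
- by rewrite brAl !brAr [br x1 y0 + _]addrC addrACA.
- by rewrite -[br x0 y0]scale1r; apply: stabilizes_comb; apply: stabilizes_br; eassumption.
- by rewrite -[br x0 y1]scale1r; apply: stabilizes_comb; apply: stabilizes_br; eassumption.
Qed.

Lemma homog_stabilizes_hom b x : par b x -> stabilizes x -> homog_stabilizes x.
Proof.
move=> pb sx; have s0 := stabilizes0.
case: b pb => pb; first by exists 0, x; rewrite add0r; split=> //; exact: lin0 (par_lin _).
by exists x, 0; rewrite addr0; split=> //; exact: lin0 (par_lin _).
Qed.

(* Since h, E, Fo generate, the closure is an ideal. *)
Lemma stabilizes_all x : stabilizes x.
Proof.
have [x0 [x1 [_ _ -> s0 s1]]] : homog_stabilizes x.
  apply: genEF; [exact: homog_stabilizes_lin | exact: homog_stabilizes_br |].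
  move=> s [[u ->]|[[i ->]|[i ->]]].
  - by apply: (homog_stabilizes_hom (par_h u)) => w; apply: Fclosure_h.
  - by apply: (homog_stabilizes_hom (parE i)) => w; apply: Fclosure_E.
  - by apply: (homog_stabilizes_hom (parF i)) => w; apply: Fclosure_Fo.
by move=> w hw; rewrite brAl; exact: (linD Fclosure_lin (s0 w hw) (s1 w hw)).
Qed.

(* A weight vector of weight lam, lam(h0) = 2 c0, killed by every E_i is zero:
   it generates an ideal meeting h trivially. *)
Lemma lowest_weight_vanishing : v = 0.
Proof.
apply: (h_faithful (I := Fclosure)) Fclosure_v.
  by split; [exact: Fclosure_lin | move=> x w; exact: stabilizes_all].
move=> u /Fclosure_annihilated [N hN]; have [c cnz hc] := Tprod_h 0 N u.
by move: hN; rewrite hc => /eqP; rewrite scaler_eq0 (negbTE cnz) => /eqP.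
Qed.

End Vanishing.

Hypothesis gF : forall j k, A j k = 0 -> br (hmap (g j)) (Fo k) = 0.

Lemma Fo_comm j k : A j k = 0 -> A k j = 0 -> br (Fo j) (Fo k) = 0.
Proof.
move=> Ajk Akj; apply: (@lowest_weight_vanishing _ (mu j + mu k)).
- move=> u; rewrite (jacobi_even _ (par_h u) (parF j)) !hF brZl brZr.
  by rewrite evDr scalerDl.
- by rewrite evDr !h0mu mulr_natl mulr2n.
- move=> i; rewrite (jacobi _ (parE i) (parF j)) !hEF.
  have -> : br (if i == j then hmap (g i) else 0) (Fo k) = 0.
    by case: eqP => [->|_]; rewrite ?gF ?br0l.
  rewrite add0r; case: eqP => [->|_]; last by rewrite br0r scaler0.
  by rewrite (antisym_even (parF j) (par_h _)) gF // oppr0 scaler0.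
Qed.

End LowestWeightVanishing.

Lemma hYX i j :
  br (Y i) (X j) = if i == j then hmap (- (-1) ^+ p i *: hh i) else 0.
Proof.
rewrite (antisym (parY i) (parX j)) hXY eq_sym.
by case: eqP => [->|_]; rewrite ?andbb ?hmapZ ?scaleNr // scaler0 oppr0.
Qed.

Lemma gen_swap v : generated_by br
  (fun w => (exists u, w = hmap u) \/ (exists i, w = Y i) \/ (exists i, w = X i)) v.
Proof. by move=> W linW brW genW; apply: gen => // s hs; apply: genW; tauto. Qed.

(* Y_j and Y_k supercommute when a_jk = a_kj = 0 (in particular [Y_k, Y_k] = 0
   when a_kk = 0): lowest weight vanishing with E = X, Fo = Y, c0 = -1. *)
Lemma Y_comm j k : A j k = 0 -> A k j = 0 -> br (Y j) (Y k) = 0.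
Proof.
have [h0 h0alpha] := exists_unit_coweight freeA.
apply: (Fo_comm (mu := fun j => - alpha j) (h0 := h0) gen parX parY _ hXY).
- by move=> u i; rewrite hY evNr scaleNr.
- by move=> i; rewrite evNr h0alpha.
- by rewrite oppr_eq0 oner_neq0.
- by move=> i l Ail; rewrite hY evhh Ail scale0r oppr0.
Qed.

(* Likewise for X, with E = Y, Fo = X, c0 = 1. *)
Lemma X_comm j k : A j k = 0 -> A k j = 0 -> br (X j) (X k) = 0.
Proof.
have [h0 h0alpha] := exists_unit_coweight freeA.
apply: (Fo_comm (mu := alpha) (h0 := h0) gen_swap parY parX hX hYX h0alpha).
- exact: oner_neq0.
- by move=> i l Ail; rewrite hmapZ brZl hX evhh Ail scale0r scaler0.
Qed.

Section OddReflection.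
Variable k : 'I_n.
Hypothesis Akk : A k k = 0.
Hypothesis pk : p k = true.

Local Notation X' := (Xp A br X Y k).
Local Notation Y' := (Xp A br Y X k).

Lemma Xp_weight u i : br (hmap u) (X' i) = ev u (rk A alpha k i) *: X' i.
Proof.
rewrite /Xp /rk; case: eqP => _; first by rewrite hY evNr scaleNr.
case: ifP => _; first exact: hX.
by rewrite (jacobi_even _ (par_h u) (parX i)) !hX brZl brZr evDr scalerDl.
Qed.

Lemma Yp_weight u i : br (hmap u) (Y' i) = - (ev u (rk A alpha k i) *: Y' i).
Proof.
rewrite /Xp /rk; case: eqP => _; first by rewrite hX evNr scaleNr opprK.
case: ifP => _; first exact: hY.
rewrite (jacobi_even _ (par_h u) (parY i)) !hY brNl brNr brZl brZr.
by rewrite evDr scalerDl opprD.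
Qed.

Lemma XX_Y_other i j : i != j -> k != j -> br (br (X i) (X k)) (Y j) = 0.
Proof.
move=> nij nkj; have := jacobi (Y j) (parX i) (parX k).
by rewrite !hXY (negbTE nij) (negbTE nkj) !br0r scaler0 addr0 => <-.
Qed.

Lemma XX_Yk i : i != k -> br (br (X i) (X k)) (Y k) = - (A k i *: X i).
Proof.
move=> nik; have := jacobi (Y k) (parX i) (parX k).
rewrite !hXY eqxx (negbTE nik) br0r scaler0 addr0 => <-.
by rewrite (antisym_even (parX i) (par_h _)) hX evhh.
Qed.

Lemma YY_Xk i : i != k -> br (br (Y i) (Y k)) (X k) = A k i *: Y i.
Proof.
move=> nik; have := jacobi (X k) (parY i) (parY k).
rewrite !hYX eqxx (negbTE nik) br0r scaler0 addr0 pk expr1 opprK scale1r => <-.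
by rewrite (antisym_even (parY i) (par_h _)) hY evhh opprK.
Qed.

(* Since Y_k is odd and [Y_k, Y_k] = 0, ad Y_k squares to zero. *)
Lemma Yk_YY j : br (Y k) (br (Y j) (Y k)) = 0.
Proof.
apply: eq_opp0.
rewrite [LHS](jacobi _ (parY k) (parY j)) (Y_comm Akk Akk) br0r scaler0 addr0.
rewrite (antisym (parY k) (parY j)) brNl brZl.
rewrite (antisym (par_br (parY j) (parY k)) (parY k)) pk.
by case: (p j); rewrite ?expr1 ?expr0 ?scale1r ?scaleN1r ?opprK.
Qed.

(* Likewise ad X_k squares to zero. *)
Lemma XX_Xk i : br (br (X i) (X k)) (X k) = 0.
Proof.
have := jacobi (X k) (parX i) (parX k); rewrite (X_comm Akk Akk) br0r.
rewrite (antisym (parX k) (par_br (parX i) (parX k))) pk andbT.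
by case: (p i); rewrite ?expr1 ?expr0 ?scale1r ?scaleN1r ?opprK /= => h;
  apply: eq_opp0; apply/eqP; rewrite -subr_eq0 opprK h.
Qed.

Lemma Xp_Yp i j : br (X' i) (Y' j) = if i == j then hp A br X Y k i else 0.
Proof.
case: (eqVneq i j) => [<-|nij] //; rewrite /Xp.
case: (eqVneq i k) => [eik|nik]; case: (eqVneq j k) => [ejk|njk].
- by move: nij; rewrite eik ejk eqxx.
- case: ifP => [/andP [/eqP Ajk /eqP Akj]|_]; last exact: Yk_YY.
  by rewrite (antisym (parY k) (parY j)) Y_comm // scaler0 oppr0.
- by case: ifP => [/andP [/eqP Aik /eqP Aki]|_]; [exact: X_comm | exact: XX_Xk].
- have nkj : k != j by rewrite eq_sym.
  case: ifP => [/andP [/eqP Aik /eqP Aki]|_]; case: ifP => [/andP [/eqP Ajk /eqP Akj]|_].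
  + by rewrite hXY (negbTE nij).
  + rewrite (jacobi _ (parX i) (parY j)) !hXY (negbTE nij) (negbTE nik).
    by rewrite br0l br0r scaler0 addr0.
  + exact: XX_Y_other.
  + rewrite (jacobi _ (par_br (parX i) (parX k)) (parY j)) XX_Y_other // br0l add0r.
    by rewrite XX_Yk // brNr brZr hYX eq_sym (negbTE nij) scaler0 oppr0 scaler0.
Qed.

Lemma linked_Aki (reg : forall j, j != k -> A k j = 0 -> A j k = 0) i :
  i != k -> ~~ ((A i k == 0) && (A k i == 0)) -> A k i != 0.
Proof. by move=> nik; apply: contra => /eqP Aki; rewrite reg // Aki !eqxx. Qed.

Lemma generated_by_new (reg : forall j, j != k -> A k j = 0 -> A j k = 0) v :
  generated_by br (fun w => (exists u, w = hmap u) \/ (exists i, w = X' i) \/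
                             (exists i, w = Y' i)) v.
Proof.
move=> W linW brW genW; apply: gen => // s [[u ->]|[[i ->]|[i ->]]].
- by apply: genW; left; exists u.
- case: (eqVneq i k) => [->|nik].
    by apply: genW; right; right; exists k; rewrite /Xp eqxx.
  case: (boolP ((A i k == 0) && (A k i == 0))) => [unlinked|linked].
    by apply: genW; right; left; exists i; rewrite /Xp (negbTE nik) unlinked.
  have -> : X i = (- (A k i)^-1) *: br (X' i) (X' k).
    rewrite /Xp eqxx (negbTE nik) (negbTE linked) XX_Yk // scalerN scaleNr opprK.
    by rewrite scalerA mulVf ?scale1r ?linked_Aki.
  by apply: (linZ linW); apply: brW; apply: genW; right; left; eexists.
- case: (eqVneq i k) => [->|nik].
    by apply: genW; right; left; exists k; rewrite /Xp eqxx.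
  case: (boolP ((A i k == 0) && (A k i == 0))) => [unlinked|linked].
    by apply: genW; right; right; exists i; rewrite /Xp (negbTE nik) unlinked.
  have -> : Y i = (A k i)^-1 *: br (Y' i) (Y' k).
    rewrite /Xp eqxx (negbTE nik) (negbTE linked) YY_Xk //.
    by rewrite scalerA mulVf ?scale1r ?linked_Aki.
  by apply: (linZ linW); apply: brW; apply: genW; right; right; eexists.
Qed.

End OddReflection.
End Contragredient.
End SuperLie.

Unset Implicit Arguments.

Theorem lemma4p1 (F : numClosedFieldType) (n : nat) (A : 'M[F]_n)
    (p : 'I_n -> bool) (m : nat) (alpha : 'I_n -> 'cV[F]_m)
    (hh : 'I_n -> 'rV[F]_m) (V : lmodType F) (br : V -> V -> V)
    (par : bool -> V -> Prop) (hmap : 'rV[F]_m -> V) (X Y : 'I_n -> V)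
    (k : 'I_n) :
  is_contragredient A p alpha hh br par hmap X Y ->
  A k k = 0 -> p k = true ->
  let X' := Xp A br X Y k in
  let Y' := Xp A br Y X k in
  let h' := hp A br X Y k in
  free [seq rk A alpha k i | i <- enum 'I_n] /\
  (forall u i, br (hmap u) (X' i) = ev u (rk A alpha k i) *: X' i) /\
  (forall u i, br (hmap u) (Y' i) = - (ev u (rk A alpha k i) *: Y' i)) /\
  (forall i j, br (X' i) (Y' j) = if i == j then h' i else 0) /\
  ((forall j, j != k -> A k j = 0 -> A j k = 0) ->
   forall v, generated_by br
     (fun w => (exists u, w = hmap u) \/ (exists i, w = X' i) \/ (exists i, w = Y' i)) v).
Proof.
move=> HC Akk pk X' Y' h'; rewrite {}/X' {}/Y' {}/h'.
have [_ [freeA [evhh [HL [hmapD [_ [par_h [br_hh [parXY [hX [hY [hXY [gen faithful]]]]]]]]]]]]]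
  := HC.
have charF0 := pchar_num F.
split; first exact: rk_free.
split; first exact: (Xp_weight HL).
split; first exact: (Yp_weight HL).
split; first exact: (Xp_Yp HL charF0 freeA).
exact: (generated_by_new HL).
Qed.
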